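(* Let $Q\in T_{d,n}\cap V_{d,n,\mathrm{gen}}$. Then the tangent space to $V_{d,n}$ at $Q$ is \[ \{Z\in M_n^d : [Q^r,Z^s]=[Q^s,Z^r]\ \ \forall\, 1\le r\ne s\le d\}, \] and the tangent space to $T_{d,n}$ at $Q$ is the set of $Z\in T_{d,n}$ satisfying the same equations. The real dimension of the first tangent space is $2n^2+2(d-1)n$ and of the second is $n^2+(2d-1)n$.
   Context: $M_n$ denotes the $n\times n$ complex matrices and $[A,B]=AB-BA$. $V_{d,n}$ is the set of $d$-tuples of pairwise commuting matrices in $M_n$; $V_{d,n,\mathrm{gen}}$ is the set of $X\in V_{d,n}$ each of whose components $X^r$ has $n$ distinct eigenvalues. $T_{d,n}$ is the set of commuting $d$-tuples of $n\times n$ matrices that are upper triangular with respect to a fixed basis. *)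

From HB Require Import structures.
From mathcomp Require Import all_boot all_order all_algebra.
From mathcomp Require Import reals.
From mathcomp Require Import complex.
Set Implicit Arguments. Unset Strict Implicit. Unset Printing Implicit Defensive.
Import Order.TTheory GRing.Theory Num.Theory.
Local Open Scope ring_scope.
Local Open Scope complex_scope.

(* A d-tuple of n x n complex matrices: X r = X^{r+1}. *)
Definition mxtuple (R : realType) (d n : nat) := 'I_d -> 'M[R[i]]_n.

Definition Vdn (R : realType) (d n : nat) (X : mxtuple R d n) : Prop :=
  forall r s : 'I_d, X r *m X s = X s *m X r.

Definition n_distinct_eigenvalues (R : realType) (n : nat) (A : 'M[R[i]]_n) : Prop :=
  exists s : seq R[i], [/\ uniq s, size s = n & forall a, a \in s -> eigenvalue A a].

Definition Vdn_gen (R : realType) (d n : nat) (X : mxtuple R d n) : Prop :=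
  Vdn X /\ forall r : 'I_d, n_distinct_eigenvalues (X r).

Definition upper_tuple (R : realType) (d n : nat) (X : mxtuple R d n) : Prop :=
  forall (r : 'I_d) (i j : 'I_n), (j < i)%N -> X r i j = 0.

Definition Tdn (R : realType) (d n : nat) (X : mxtuple R d n) : Prop :=
  Vdn X /\ upper_tuple X.

(* Tangent space of a set S of d-tuples at Q (S viewed as a subset of the real
   vector space M_n(C)^d): the set of velocities gamma'(0) of curves
   gamma : (-eps, eps) -> S with gamma(0) = Q, differentiable at 0. *)
Definition tangent_space (R : realType) (d n : nat)
  (S : mxtuple R d n -> Prop) (Q Z : mxtuple R d n) : Prop :=
  exists (gamma : R -> mxtuple R d n) (eps : R),
    [/\ 0 < eps,
        (forall t : R, `|t| < eps -> S (gamma t)),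
        gamma 0 = Q &
        forall e : R, 0 < e -> exists delta : R, 0 < delta /\
          forall t : R, 0 < `|t| < delta ->
            forall (r : 'I_d) (i j : 'I_n),
              `|(gamma t r i j - Q r i j) / t%:C - Z r i j| < e%:C].

Definition comm_bracket (R : realType) (n : nat) (A B : 'M[R[i]]_n) := A *m B - B *m A.

Definition tangent_eqs (R : realType) (d n : nat) (Q Z : mxtuple R d n) : Prop :=
  forall r s : 'I_d, r != s ->
    comm_bracket (Q r) (Z s) = comm_bracket (Q s) (Z r).

(* S (a set of d-tuples) is a real vector subspace of M_n(C)^d of real
   dimension k: it is the image of an injective R-linear map R^k -> M_n(C)^d. *)
Definition real_dim (R : realType) (d n : nat) (S : mxtuple R d n -> Prop) (k : nat) : Prop :=
  exists f : 'rV[R]_k -> mxtuple R d n,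
    [/\ (forall (a : R) (x y : 'rV[R]_k),
           f (a *: x + y) = (fun r => a%:C *: f x r + f y r)),
        injective f &
        forall Z, S Z <-> exists x, f x = Z].

(* Q^1 is upper triangular with n distinct eigenvalues, which are its diagonal
   entries; its commutant is therefore the set of polynomials of degree < n in
   A = Q^1, and Q^r = p_r(A) for all r.  Differentiating [gamma^r, gamma^s] = 0
   at t = 0 along a curve gamma in V_{d,n} through Q gives the linear equations.
   Conversely, if Z satisfies them, then Z^r - Dp_r(A)[Z^1] commutes with A, so
   Z^r = Dp_r(A)[Z^1] + q_r(A) with q_1 = 0, and Z is the velocity of the
   commuting polynomial curve t |-> (p_r + t q_r)(A + t Z^1), which stays upper
   triangular when Z^1 is.  The tangent space is thus parametrized, injectively
   and R-linearly, by Z^1 and the n coefficients of each q_r (r >= 2): this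
   gives 2n^2 + 2(d-1)n real parameters, and n^2 + n + 2(d-1)n when Z^1 ranges
   over upper triangular matrices. *)

From HB Require Import structures.
From mathcomp Require Import all_boot all_order all_algebra.
From mathcomp Require Import reals complex.
From mathcomp Require Import ring lra zify.
From Stdlib Require Import FunctionalExtensionality.
Set Implicit Arguments. Unset Strict Implicit. Unset Printing Implicit Defensive.
Import Order.TTheory GRing.Theory Num.Theory.
Local Open Scope ring_scope.

Section UpperTriangular.
Variables (K : comNzRingType) (n' : nat).
Local Notation n := n'.+1.
Implicit Types (A B : 'M[K]_n) (a : K).

Definition upper_mx A := forall i j : 'I_n, (j < i)%N -> A i j = 0.

Lemma upper_mxD A B : upper_mx A -> upper_mx B -> upper_mx (A + B).
Proof. by move=> uA uB i j ji; rewrite mxE uA ?uB ?addr0. Qed.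

Lemma upper_mxZ a A : upper_mx A -> upper_mx (a *: A).
Proof. by move=> uA i j ji; rewrite mxE uA ?mulr0. Qed.

Lemma upper_mxM A B : upper_mx A -> upper_mx B -> upper_mx (A *m B).
Proof.
move=> uA uB i j ji; rewrite mxE; apply: big1 => k _.
have [ki|ik] := ltnP k i; first by rewrite uA ?mul0r.
by rewrite uB ?mulr0 // (leq_trans ji).
Qed.

Lemma upper_scalar_mx a : upper_mx a%:M.
Proof. by move=> i j; rewrite mxE; case: eqP => // ->; rewrite ltnn. Qed.

Lemma upper_horner_mx A p : upper_mx A -> upper_mx (horner_mx A p).
Proof.
move=> uA; elim/poly_ind: p => [|p c IHp].
  by rewrite rmorph0 => i j _; rewrite mxE.
rewrite rmorphD rmorphM /= horner_mx_X horner_mx_C.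
by apply: upper_mxD; [apply: upper_mxM | apply: upper_scalar_mx].
Qed.

End UpperTriangular.

Section UpperEigen.
Variables (K : fieldType) (n' : nat).
Local Notation n := n'.+1.
Variable A : 'M[K]_n.
Hypothesis uA : upper_mx A.

Lemma upper_eigenvector_lead (u : 'rV[K]_n) a : u *m A = a *: u -> u != 0 ->
  exists k, [/\ u 0 k != 0, A k k = a & forall j : 'I_n, (j < k)%N -> u 0 j = 0].
Proof.
move=> uAa u_neq0.
have [j1 uj1] : exists j1, u 0 j1 != 0.
  apply/existsP; apply: contraR u_neq0 => /existsPn u0.
  by apply/eqP/rowP => j; rewrite mxE; apply/eqP/negPn.
case: (@arg_minnP _ j1 (fun j => u 0 j != 0) (fun j : 'I_n => nat_of_ord j) uj1) => k uk kmin.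
have u_lt_k (j : 'I_n) : (j < k)%N -> u 0 j = 0.
  by move=> jk; apply/eqP/negPn/negP => /kmin; rewrite leqNgt jk.
exists k; split => //.
have := congr1 (fun v : 'rV[K]_n => v 0 k) uAa; rewrite !mxE.
rewrite (bigD1 k) //= big1 ?addr0 => [|j jk]; first by rewrite mulrC => /(mulIf uk).
have [lt_jk|kj] := ltnP j k; first by rewrite u_lt_k ?mul0r.
by rewrite uA ?mulr0 // ltn_neqAle kj andbT eq_sym.
Qed.

Lemma upper_eigenvalue_diag a : eigenvalue A a -> exists k, A k k = a.
Proof.
by case/eigenvalueP => u uAa /(upper_eigenvector_lead uAa) [k [_ Akk _]]; exists k.
Qed.

Hypothesis diagA_inj : injective (fun k => A k k).

Lemma upper_eigenvector_exists k : exists v : 'rV[K]_n,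
  [/\ v *m A = A k k *: v, v 0 k = 1 & forall j : 'I_n, (j < k)%N -> v 0 j = 0].
Proof.
have det0 : \det (A - (A k k)%:M) == 0.
  rewrite -det_tr det_trig; last first.
    apply/is_trig_mxP => i j ij; rewrite !mxE uA //.
    by case: eqP ij => [->|_]; rewrite ?ltnn ?mulr0n ?subrr.
  by rewrite (bigD1 k) //= !mxE eqxx mulr1n subrr mul0r.
have [v v_neq0 vAk] := det0P det0.
have vA : v *m A = A k k *: v.
  by apply/eqP; rewrite -subr_eq0 -mul_mx_scalar -mulmxBr vAk.
have [j [vj Ajj v_lt_j]] := upper_eigenvector_lead vA v_neq0.
have jk : j = k := diagA_inj Ajj.
subst j; exists ((v 0 k)^-1 *: v); split.
- by rewrite -scalemxAl vA !scalerA mulrC.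
- by rewrite mxE mulVf.
- by move=> j jk; rewrite mxE (v_lt_j j jk) mulr0.
Qed.

Section EigenBasis.
Variable V : 'I_n -> 'rV[K]_n.
Hypothesis V_eigen : forall k,
  [/\ V k *m A = A k k *: V k, V k 0 k = 1 & forall j : 'I_n, (j < k)%N -> V k 0 j = 0].

Lemma eigenbasis_rows_eq (B C : 'M[K]_n) : (forall k, V k *m B = V k *m C) -> B = C.
Proof.
move=> VBC; pose S : 'M[K]_n := \matrix_k V k.
have S_unit : S \in unitmx.
  rewrite unitmxE -det_tr det_trig; last first.
    by apply/is_trig_mxP => i j ij; rewrite !mxE; have [_ _ ->] := V_eigen j.
  by rewrite big1 ?unitr1 // => i _; rewrite !mxE; have [_ -> _] := V_eigen i.
apply: (can_inj (mulKmx S_unit)); apply/row_matrixP => k.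
by rewrite !row_mul rowK; apply: VBC.
Qed.

Lemma eigenbasis_line k (w : 'rV[K]_n) : w *m A = A k k *: w -> w = w 0 k *: V k.
Proof.
move=> wA; have [VA Vkk _] := V_eigen k.
apply/eqP; rewrite -subr_eq0; apply/negPn/negP => u_neq0.
have uA' : (w - w 0 k *: V k) *m A = A k k *: (w - w 0 k *: V k).
  by rewrite mulmxBl -scalemxAl VA wA scalerBr !scalerA mulrC.
have [j [uj Ajj _]] := upper_eigenvector_lead uA' u_neq0.
have jk : j = k := diagA_inj Ajj.
by move: uj; rewrite jk !mxE Vkk mulr1 subrr eqxx.
Qed.

Lemma eigenbasis_horner k p : V k *m horner_mx A p = p.[A k k] *: V k.
Proof.
have [VA _ _] := V_eigen k.
elim/poly_ind: p => [|p c IHp]; first by rewrite rmorph0 mulmx0 horner0 scale0r.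
rewrite rmorphD rmorphM /= horner_mx_X horner_mx_C -mulmxE mulmxDr mulmxA IHp.
by rewrite -scalemxAl VA scalerA mul_mx_scalar hornerMXaddC scalerDl.
Qed.

End EigenBasis.

Lemma horner_rVpolyE (c : 'rV[K]_n) x : (rVpoly c).[x] = \sum_(i < n) c 0 i * x ^+ i.
Proof.
rewrite (horner_coef_wide _ (size_poly _ _)).
by apply: eq_bigr => i _; rewrite coef_rVpoly_ord.
Qed.

Lemma diag_interpolation (mu : 'I_n -> K) :
  exists c : 'rV[K]_n, forall k, (rVpoly c).[A k k] = mu k.
Proof.
pose W := Vandermonde n (\row_k A k k).
have W_unit : W \in unitmx.
  rewrite unitmxE unitfE det_Vandermonde; apply/prodf_neq0 => i _.
  apply/prodf_neq0 => j ij; rewrite !mxE subr_eq0.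
  by apply: contraTneq ij => /diagA_inj ->; rewrite ltnn.
exists ((\row_k mu k) *m invmx W) => k.
have := congr1 (fun v : 'rV[K]_n => v 0 k) (mulmxKV W_unit (\row_k mu k)).
by rewrite /= !mxE horner_rVpolyE => <-; apply: eq_bigr => i _; rewrite !mxE.
Qed.

Lemma upper_commutant (B : 'M[K]_n) : A *m B = B *m A ->
  exists c : 'rV[K]_n, B = horner_mx A (rVpoly c).
Proof.
move=> AB; have [V V_eigen] := fin_all_exists upper_eigenvector_exists.
have VB k : V k *m B = (V k *m B) 0 k *: V k.
  apply: (eigenbasis_line V_eigen); have [VA _ _] := V_eigen k.
  by rewrite -mulmxA -AB mulmxA VA -scalemxAl.
have [c c_mu] := diag_interpolation (fun k => (V k *m B) 0 k).
exists c; apply: (eigenbasis_rows_eq V_eigen) => k.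
by rewrite (eigenbasis_horner V_eigen) c_mu -VB.
Qed.

Lemma horner_rVpoly_eq0 (c : 'rV[K]_n) : horner_mx A (rVpoly c) = 0 -> c = 0.
Proof.
move=> c0; have [V V_eigen] := fin_all_exists upper_eigenvector_exists.
have root_c k : root (rVpoly c) (A k k).
  have := congr1 (fun v : 'rV[K]_n => v 0 k) (eigenbasis_horner V_eigen k (rVpoly c)).
  by have [_ Vkk _] := V_eigen k; rewrite c0 mulmx0 !mxE Vkk mulr1 => /esym/eqP.
have p0 : rVpoly c = 0.
  apply/eqP; apply: contraT => p_neq0.
  have := @max_poly_roots _ _ [seq A k k | k <- enum 'I_n] p_neq0.
  rewrite size_map size_enum_ord map_inj_uniq ?enum_uniq // ltnNge size_poly /=.
  by move/(_ _ isT); apply; apply/allP => _ /mapP [k _ ->]; apply: root_c.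
by rewrite -[c]rVpolyK p0 linear0.
Qed.

End UpperEigen.

Section MatrixPolyDerivative.
Variables (K : comNzRingType) (n' : nat).
Local Notation n := n'.+1.
Local Notation M := 'M[K]_n.
Implicit Types (p : {poly K}) (P : {poly M}) (A Z : M).

Definition horner_polymx p P : {poly M} :=
  (map_poly (polyC \o @scalar_mx K n) p).[P].

Lemma horner_polymx0 P : horner_polymx 0 P = 0.
Proof. by rewrite /horner_polymx rmorph0 horner0. Qed.

Lemma horner_polymxMXaddC p c P :
  horner_polymx (p * 'X + c%:P) P = horner_polymx p P * P + (c%:M)%:P.
Proof. by rewrite /horner_polymx rmorphD rmorphM /= map_polyX map_polyC hornerMXaddC. Qed.

Lemma coef0_horner_polymx p P : (horner_polymx p P)`_0 = horner_mx P`_0 p.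
Proof.
elim/poly_ind: p => [|p c IHp]; first by rewrite horner_polymx0 coef0 rmorph0.
rewrite horner_polymxMXaddC coefD coef0M IHp coefC rmorphD rmorphM /=.
by rewrite horner_mx_X horner_mx_C.
Qed.

Lemma horner_scalar_horner_polymx p P (x : K) :
  (horner_polymx p P).[x%:M] = horner_mx P.[x%:M] p.
Proof.
have comm_x (Q : {poly M}) : comm_poly Q x%:M by rewrite /comm_poly -!mulmxE scalar_mxC.
elim/poly_ind: p => [|p c IHp]; first by rewrite horner_polymx0 horner0 rmorph0.
rewrite horner_polymxMXaddC hornerD (hornerM_comm _ (comm_x _)) hornerC IHp.
by rewrite rmorphD rmorphM /= horner_mx_X horner_mx_C.
Qed.

(* The derivative at t = 0 of t |-> p(A + t Z): the coefficient of 'X in the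
   matrix-coefficient polynomial p(A + 'X Z). *)
Definition dhorner_mx p A Z : M := (horner_polymx p (A%:P + 'X * Z%:P))`_1.

Lemma dhorner_mx0 A Z : dhorner_mx 0 A Z = 0.
Proof. by rewrite /dhorner_mx horner_polymx0 coef0. Qed.

Lemma dhorner_mxMXaddC p c A Z :
  dhorner_mx (p * 'X + c%:P) A Z = horner_mx A p * Z + dhorner_mx p A Z * A.
Proof.
have coef01 : (A%:P + 'X * Z%:P)`_0 = A /\ (A%:P + 'X * Z%:P)`_1 = Z.
  by rewrite !coefD !coefC !coefXM !coefC /= addr0 add0r.
rewrite /dhorner_mx horner_polymxMXaddC coefD coefC addr0 coefM.
rewrite !big_ord_recr big_ord0 /= add0r coef0_horner_polymx.
by case: coef01 => -> ->.
Qed.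

Lemma dhorner_mxX A Z : dhorner_mx 'X A Z = Z.
Proof.
have -> : 'X = 1 * 'X + 0%:P :> {poly K} by rewrite mul1r addr0.
rewrite dhorner_mxMXaddC rmorph1 mul1r.
have -> : 1 = 0 * 'X + 1%:P :> {poly K} by rewrite mul0r add0r.
by rewrite dhorner_mxMXaddC dhorner_mx0 rmorph0 !(mul0r, addr0).
Qed.

Lemma dhorner_mx_linear p A (a : K) Z W :
  dhorner_mx p A (a *: Z + W) = a *: dhorner_mx p A Z + dhorner_mx p A W.
Proof.
elim/poly_ind: p => [|p c IHp]; first by rewrite !dhorner_mx0 scaler0 addr0.
rewrite !dhorner_mxMXaddC IHp mulrDr mulrDl -scalerAr -scalerAl scalerDr.
by rewrite addrACA.
Qed.

Lemma dhorner_mx_commutator p A Z :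
  A * dhorner_mx p A Z - dhorner_mx p A Z * A = horner_mx A p * Z - Z * horner_mx A p.
Proof.
elim/poly_ind: p => [|p c IHp]; first by rewrite dhorner_mx0 rmorph0 !(mulr0, mul0r) subrr.
rewrite dhorner_mxMXaddC rmorphD rmorphM /= horner_mx_X horner_mx_C.
move: IHp; set a := horner_mx A p; set D := dhorner_mx p A Z => IHp.
have Aa : A * a = a * A by apply: comm_mx_horner.
have cZ : c%:M * Z = Z * c%:M by apply: comm_scalar_mx.
have -> : A * (a * Z + D * A) - (a * Z + D * A) * A
          = A * a * Z - a * Z * A + (A * D - D * A) * A.
  by rewrite mulrDr mulrDl !mulrA opprD addrACA mulrBl.
rewrite IHp mulrBl addrA subrK Aa mulrDl mulrDr cZ opprD addrACA subrr addr0.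
by rewrite !mulrA.
Qed.

End MatrixPolyDerivative.

Local Open Scope complex_scope.

Section PolyDiffQuotient.
Variable K : numFieldType.

Lemma poly_diff_quotient_bound (p : {poly K}) : exists2 B : K, 0 <= B &
  forall t, t != 0 -> `|t| <= 1 -> `|(p.[t] - p`_0) / t - p`_1| <= `|t| * B.
Proof.
set q := drop_poly 2 p.
exists (\sum_(k < size q) `|q`_k|); first exact: sumr_ge0.
move=> t t0 t1.
have -> : (p.[t] - p`_0) / t - p`_1 = q.[t] * t.
  rewrite -{1}(poly_take_drop 2 p) hornerD hornerM hornerXn horner_poly.
  by rewrite !big_ord_recr big_ord0 /= add0r expr0 expr1 mulr1 -/q; field.
rewrite normrM mulrC ler_wpM2l // horner_coef.
apply: le_trans (ler_norm_sum _ _ _) _; apply: ler_sum => k _.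
by rewrite normrM normrX ler_piMr ?exprn_ile1.
Qed.

Lemma uniform_poly_diff_quotient_bound (I : finType) (p : I -> {poly K}) :
  exists2 B : K, 0 <= B & forall t, t != 0 -> `|t| <= 1 ->
    forall x, `|((p x).[t] - (p x)`_0) / t - (p x)`_1| <= `|t| * B.
Proof.
have [B B0 pB] := fin_all_exists2 (fun x => poly_diff_quotient_bound (p x)).
exists (\sum_x B x); first exact: sumr_ge0.
move=> t t0 t1 x; apply: le_trans (pB x t t0 t1) _.
by rewrite ler_wpM2l // (bigD1 x) //= lerDl sumr_ge0.
Qed.

End PolyDiffQuotient.

Section MatrixEntryPoly.
Variables (K : comNzRingType) (n' : nat).
Local Notation n := n'.+1.
Implicit Type P : {poly 'M[K]_n}.

Definition mxentry_poly P (i j : 'I_n) : {poly K} := \poly_(k < size P) P`_k i j.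

Lemma coef_mxentry_poly P i j k : (mxentry_poly P i j)`_k = P`_k i j.
Proof. by rewrite coef_poly; case: ltnP => // kP; rewrite nth_default // mxE. Qed.

Lemma horner_mxentry_poly P i j x : P.[x%:M] i j = (mxentry_poly P i j).[x].
Proof.
rewrite horner_coef horner_poly summxE; apply: eq_bigr => k _.
by rewrite -rmorphXn /= -mulmxE mul_mx_scalar mxE mulrC.
Qed.

End MatrixEntryPoly.

Lemma norm_real_complex (R : realType) (x : R) : `|x%:C| = `|x|%:C.
Proof. by rewrite normc_def /= expr0n /= addr0 sqrtr_sqr. Qed.

Definition velocity_at0 (R : realType) (d n : nat)
  (gamma : R -> mxtuple R d n) (Q Z : mxtuple R d n) : Prop :=
  forall e : R, 0 < e -> exists delta : R, 0 < delta /\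
    forall t : R, 0 < `|t| < delta -> forall (r : 'I_d) (i j : 'I_n),
      `|(gamma t r i j - Q r i j) / t%:C - Z r i j| < e%:C.

Section PolynomialCurves.
Variables (R : realType) (d n' : nat).
Local Notation n := n'.+1.
Local Notation C := R[i].
Local Notation M := 'M[C]_n.

Lemma polymx_curve_velocity (P : 'I_d -> {poly M}) :
  velocity_at0 (fun t r => (P r).[(t%:C)%:M]) (fun r => (P r)`_0) (fun r => (P r)`_1).
Proof.
pose entry (x : 'I_d * 'I_n * 'I_n) := mxentry_poly (P x.1.1) x.1.2 x.2.
have [B B0 PB] := uniform_poly_diff_quotient_bound entry.
have Bb : B = (complex.Re B)%:C by rewrite RRe_real ?ger0_real.
have b0 : 0 <= complex.Re B by rewrite -lecR -Bb.
move=> e e0; exists (Num.min 1 (e / (complex.Re B + 1))).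
split; first by rewrite lt_min ltr01 divr_gt0 // ltr_wpDl.
move=> t /andP [t0]; rewrite lt_min => /andP [t1 te] r i j.
have tC0 : t%:C != 0 by rewrite (inj_eq (@complexI _)) -normr_gt0.
have tC1 : `|t%:C| <= 1 by rewrite norm_real_complex lecR ltW.
have := PB _ tC0 tC1 (r, i, j).
rewrite /entry /= !coef_mxentry_poly -horner_mxentry_poly => /le_lt_trans; apply.
rewrite norm_real_complex Bb -rmorphM ltcR.
rewrite ltr_pdivlMr ?ltr_wpDl // in te; apply: le_lt_trans te.
by rewrite ler_wpM2l // lerDl.
Qed.

Lemma horner_mx_curve_velocity (A Z1 : M) (p q : 'I_d -> {poly C}) :
  velocity_at0 (fun t r => horner_mx (A + t%:C *: Z1) (p r + t%:C *: q r))
               (fun r => horner_mx A (p r))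
               (fun r => dhorner_mx (p r) A Z1 + horner_mx A (q r)).
Proof.
pose X := A%:P + 'X * Z1%:P.
pose P r := horner_polymx (p r) X + 'X * horner_polymx (q r) X.
have PE t r : horner_mx (A + t%:C *: Z1) (p r + t%:C *: q r) = (P r).[(t%:C)%:M].
  have XE : X.[(t%:C)%:M] = A + t%:C *: Z1.
    by rewrite hornerD hornerC -commr_polyX hornerMX hornerC -mulmxE mul_mx_scalar.
  rewrite hornerD -commr_polyX hornerMX !horner_scalar_horner_polymx XE.
  by rewrite -mul_polyC rmorphD rmorphM /= horner_mx_C -!mulmxE mul_scalar_mx mul_mx_scalar.
have P0 r : (P r)`_0 = horner_mx A (p r).
  by rewrite coefD coefXM addr0 coef0_horner_polymx coefD coefXM coefC addr0.
have P1 r : (P r)`_1 = dhorner_mx (p r) A Z1 + horner_mx A (q r).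
  by rewrite coefD coefXM /= coef0_horner_polymx coefD coefXM coefC addr0.
move=> e e0; have [delta [delta0 Pdelta]] := polymx_curve_velocity P e0.
by exists delta; split => // t tdelta r i j; rewrite PE -P0 -P1; apply: Pdelta.
Qed.

Lemma tangent_Vdn_horner_mx (A Z1 : M) (p q : 'I_d -> {poly C}) :
  tangent_space (@Vdn R d n) (fun r => horner_mx A (p r))
                (fun r => dhorner_mx (p r) A Z1 + horner_mx A (q r)).
Proof.
exists (fun t r => horner_mx (A + t%:C *: Z1) (p r + t%:C *: q r)), 1.
split; [exact: ltr01 | | | exact: horner_mx_curve_velocity].
- by move=> t _ r s; rewrite mulmxE -!rmorphM mulrC.
- by apply: functional_extensionality => r; rewrite rmorph0 !scale0r !addr0.
Qed.

Lemma tangent_Tdn_horner_mx (A Z1 : M) (p q : 'I_d -> {poly C}) :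
  upper_mx A -> upper_mx Z1 ->
  tangent_space (@Tdn R d n) (fun r => horner_mx A (p r))
                (fun r => dhorner_mx (p r) A Z1 + horner_mx A (q r)).
Proof.
move=> uA uZ1; exists (fun t r => horner_mx (A + t%:C *: Z1) (p r + t%:C *: q r)), 1.
split; [exact: ltr01 | | | exact: horner_mx_curve_velocity].
- move=> t _; split; first by move=> r s; rewrite mulmxE -!rmorphM mulrC.
  by move=> r; apply/upper_horner_mx/upper_mxD/upper_mxZ.
- by apply: functional_extensionality => r; rewrite rmorph0 !scale0r !addr0.
Qed.

End PolynomialCurves.

Section EntrywiseNorm.
Variables (K : numDomainType) (n : nat).
Implicit Types A B : 'M[K]_n.

Definition mxnorm A : K := \sum_i \sum_j `|A i j|.

Lemma mxnorm_ge0 A : 0 <= mxnorm A.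
Proof. by apply: sumr_ge0 => i _; apply: sumr_ge0. Qed.

Lemma ler_mxnorm_row A i : \sum_j `|A i j| <= mxnorm A.
Proof.
by rewrite /mxnorm [X in _ <= X](bigD1 i) //= lerDl; apply: sumr_ge0 => k _; apply: sumr_ge0.
Qed.

Lemma ler_mxnorm_entry A i j : `|A i j| <= mxnorm A.
Proof.
apply: le_trans (ler_mxnorm_row A i).
by rewrite [X in _ <= X](bigD1 j) //= lerDl; apply: sumr_ge0.
Qed.

Lemma ler_mxnormD A B : mxnorm (A + B) <= mxnorm A + mxnorm B.
Proof.
rewrite /mxnorm -big_split; apply: ler_sum => i _; rewrite -big_split.
by apply: ler_sum => j _; rewrite mxE ler_normD.
Qed.

Lemma mxnormN A : mxnorm (- A) = mxnorm A.
Proof. by apply: eq_bigr => i _; apply: eq_bigr => j _; rewrite mxE normrN. Qed.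

Lemma ler_mxnormB A B : mxnorm (A - B) <= mxnorm A + mxnorm B.
Proof. by rewrite -(mxnormN B) ler_mxnormD. Qed.

Lemma mxnormZ a A : mxnorm (a *: A) = `|a| * mxnorm A.
Proof.
rewrite /mxnorm mulr_sumr; apply: eq_bigr => i _; rewrite mulr_sumr.
by apply: eq_bigr => j _; rewrite mxE normrM.
Qed.

Lemma ler_mxnormM A B : mxnorm (A *m B) <= mxnorm A * mxnorm B.
Proof.
apply: le_trans (_ : \sum_i \sum_j \sum_k `|A i k| * `|B k j| <= _).
  apply: ler_sum => i _; apply: ler_sum => j _; rewrite mxE.
  by apply: le_trans (ler_norm_sum _ _ _) _; apply: ler_sum => k _; rewrite normrM.
rewrite /mxnorm mulr_suml; apply: ler_sum => i _.
rewrite exchange_big /= mulr_suml; apply: ler_sum => k _.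
by rewrite -mulr_sumr ler_wpM2l ?ler_mxnorm_row.
Qed.

End EntrywiseNorm.

Section CommBracket.
Variables (R : realType) (n : nat).
Local Notation C := R[i].
Implicit Types A B D : 'M[C]_n.

Lemma comm_bracketBr A B D :
  comm_bracket A (B - D) = comm_bracket A B - comm_bracket A D.
Proof.
rewrite /comm_bracket mulmxBr mulmxBl.
move: (A *m B) (A *m D) (B *m A) (D *m A) => x y z w.
by apply/matrixP => i j; rewrite !mxE; ring.
Qed.

Lemma ler_mxnorm_bracket A B :
  mxnorm (comm_bracket A B) <= 2%:R * (mxnorm A * mxnorm B).
Proof.
rewrite /comm_bracket mulr2n mulrDl mul1r; apply: le_trans (ler_mxnormB _ _) _.
by apply: lerD; [|rewrite mulrC]; apply: ler_mxnormM.
Qed.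

Lemma comm_bracket_perturbation (Qr Qs Dr Ds : 'M[C]_n) (t : C) : t != 0 ->
  Qr *m Qs = Qs *m Qr ->
  (Qr + t *: Dr) *m (Qs + t *: Ds) = (Qs + t *: Ds) *m (Qr + t *: Dr) ->
  comm_bracket Qr Ds - comm_bracket Qs Dr = - (t *: comm_bracket Dr Ds).
Proof.
move=> t0 QQ h; apply: (scalerI t0).
have {h} : (Qr + t *: Dr) *m (Qs + t *: Ds) - (Qs + t *: Ds) *m (Qr + t *: Dr) = 0.
  by rewrite h subrr.
rewrite !(mulmxDl, mulmxDr) -!(scalemxAl, scalemxAr) QQ /comm_bracket.
move: (Qs *m Qr) (Qr *m Ds) (Ds *m Qr) (Qs *m Dr) (Dr *m Qs) (Dr *m Ds) (Ds *m Dr).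
move=> a b c e f g k h; apply/matrixP => i j.
move/matrixP/(_ i j): h; rewrite !mxE => h.
by apply/eqP; rewrite -subr_eq0 -h; apply/eqP; ring.
Qed.

End CommBracket.

Section TangentNecessary.
Variables (R : realType) (d n' : nat).
Local Notation n := n'.+1.
Local Notation C := R[i].
Local Notation M := 'M[C]_n.

Lemma small_pos_exists (a b c : R) : 0 < a -> 0 < b -> 0 < c ->
  exists t : R, [/\ 0 < t, t < a, t < b & t <= c].
Proof.
move=> a0 b0 c0; set m := Num.min a (Num.min b c).
have m0 : 0 < m by rewrite !lt_min a0 b0 c0.
have [ma mb mc] : [/\ m <= a, m <= b & m <= c] by rewrite !ge_min !lexx !orbT.
by exists (m / 2); split; lra.
Qed.

Lemma eq0_small_norm (x k : C) : 0 <= k ->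
  (forall e : R, 0 < e -> e <= 1 -> `|x| <= k * e%:C) -> x = 0.
Proof.
move=> k0 xk; apply/normr0_eq0/le_anti; rewrite normr_ge0 andbT.
have kE : k = (complex.Re k)%:C by rewrite RRe_real ?ger0_real.
have xE : `|x| = (complex.Re `|x|)%:C by rewrite RRe_real ?normr_real.
have k'0 : 0 <= complex.Re k by rewrite -lecR -kE.
rewrite xE -[0]/(0%:C) lecR; apply/ler_addgt0Pr => e e0; rewrite add0r.
set e' := Num.min 1 (e / (complex.Re k + 1)).
have e'0 : 0 < e' by rewrite lt_min ltr01 divr_gt0 // ltr_wpDl.
have := xk e' e'0; rewrite ge_min lexx => /(_ isT); rewrite xE kE -rmorphM lecR => /le_trans; apply.
apply: le_trans (_ : complex.Re k * (e / (complex.Re k + 1)) <= _).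
  by rewrite ler_wpM2l // ge_min lexx orbT.
by rewrite mulrCA ger_pMr // ler_pdivrMr ?mul1r ?lerDl ?ltr_wpDl.
Qed.

Lemma mxnorm_tangent_defect (Qr Qs Zr Zs Dr Ds : M) (t : C) :
  comm_bracket Qr Ds - comm_bracket Qs Dr = - (t *: comm_bracket Dr Ds) ->
  mxnorm (comm_bracket Qr Zs - comm_bracket Qs Zr) <=
  2%:R * (mxnorm Qr * mxnorm (Zs - Ds) + mxnorm Qs * mxnorm (Zr - Dr)
          + `|t| * (mxnorm Dr * mxnorm Ds)).
Proof.
move=> QD.
have -> : comm_bracket Qr Zs - comm_bracket Qs Zr =
    comm_bracket Qr (Zs - Ds) - comm_bracket Qs (Zr - Dr) - t *: comm_bracket Dr Ds.
  rewrite !comm_bracketBr -QD.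
  move: (comm_bracket Qr Zs) (comm_bracket Qr Ds) (comm_bracket Qs Zr) (comm_bracket Qs Dr).
  by move=> a b c e; apply/matrixP => i j; rewrite !mxE; ring.
rewrite !mulrDr; apply: le_trans (ler_mxnormB _ _) _.
rewrite mxnormZ; apply: lerD; last first.
  by rewrite mulrCA ler_wpM2l ?normr_ge0 ?ler_mxnorm_bracket.
by apply: le_trans (ler_mxnormB _ _) _; apply: lerD; apply: ler_mxnorm_bracket.
Qed.

Lemma tangent_space_eqs (Q Z : mxtuple R d n) :
  tangent_space (@Vdn R d n) Q Z -> tangent_eqs Q Z.
Proof.
case=> gamma [eps [eps0 gammaV gamma0 gammaZ]] r s _.
have QV : Vdn Q by rewrite -gamma0; apply: gammaV; rewrite normr0.
apply/eqP; rewrite -subr_eq0; apply/eqP/matrixP => i j; rewrite [RHS]mxE.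
set N := (n * n)%:R : C.
apply: (eq0_small_norm (k := 2%:R * ((mxnorm (Q r) + mxnorm (Q s)) * N
                                     + (mxnorm (Z r) + N) * (mxnorm (Z s) + N)))).
  by rewrite !(mulr_ge0, addr_ge0) ?mxnorm_ge0 ?ler0n.
move=> e e0 e1; have [delta [delta0 gammaZe]] := gammaZ e e0.
have [t [t0 t_delta t_eps t_e]] := small_pos_exists delta0 eps0 e0.
have tC0 : t%:C != 0 by rewrite (inj_eq (@complexI _)) gt_eqF.
have normt : `|t| = t by rewrite gtr0_norm.
pose D u := \matrix_(a, b) ((gamma t u a b - Q u a b) / t%:C).
have gammaD u : gamma t u = Q u + t%:C *: D u.
  by apply/matrixP => a b; rewrite !mxE; field.
have ZD u : mxnorm (Z u - D u) <= N * e%:C.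
  apply: le_trans (_ : \sum_(a < n) \sum_(b < n) e%:C <= _).
    apply: ler_sum => a _; apply: ler_sum => b _; rewrite !mxE distrC ltW //.
    by apply: gammaZe; rewrite normt t0.
  by rewrite !sumr_const !card_ord -mulrnA mulr_natl.
have ND u : mxnorm (D u) <= mxnorm (Z u) + N.
  rewrite -[D u](subKr (Z u)); apply: le_trans (ler_mxnormB _ _) _.
  by rewrite lerD2l (le_trans (ZD u)) // ler_piMr ?ler0n // lecR.
have tV : Vdn (gamma t) by apply: gammaV; rewrite normt.
have QD := comm_bracket_perturbation (Dr := D r) (Ds := D s) tC0 (QV r s).
rewrite -!gammaD in QD; move/(_ (tV r s)): QD => QD.
apply: le_trans (ler_mxnorm_entry _ i j) _.
apply: le_trans (mxnorm_tangent_defect (Z r) (Z s) QD) _.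
rewrite -mulrA ler_wpM2l ?ler0n // mulrDl; apply: lerD.
  rewrite -mulrA mulrDl; apply: lerD; rewrite ler_wpM2l ?mxnorm_ge0 //.
rewrite mulrC; apply: ler_pM; rewrite ?mulr_ge0 ?mxnorm_ge0 ?normr_ge0 //.
  by apply: ler_pM; rewrite ?mxnorm_ge0.
by rewrite norm_real_complex normt lecR.
Qed.

Lemma tangent_space_upper (Q Z : mxtuple R d n) :
  upper_tuple Q -> tangent_space (@Tdn R d n) Q Z -> upper_tuple Z.
Proof.
move=> uQ [gamma [eps [eps0 gammaT _ gammaZ]]] r i j ji.
apply: (eq0_small_norm (k := 1)) => // e e0 _.
have [delta [delta0 gammaZe]] := gammaZ e e0.
have [t [t0 t_delta t_eps _]] := small_pos_exists delta0 eps0 e0.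
have normt : `|t| = t by rewrite gtr0_norm.
have := gammaZe t _ r i j; rewrite normt t0 t_delta => /(_ isT).
rewrite (gammaT t _).2 ?normt // uQ // subrr mul0r add0r normrN mul1r.
exact: ltW.
Qed.

Lemma tangent_space_sub (S1 S2 : mxtuple R d n -> Prop) (Q Z : mxtuple R d n) :
  (forall X, S1 X -> S2 X) -> tangent_space S1 Q Z -> tangent_space S2 Q Z.
Proof.
move=> S12 [gamma [eps [eps0 gammaS gamma0 gammaZ]]].
by exists gamma, eps; split => // t /gammaS /S12.
Qed.

End TangentNecessary.

Lemma complex_real_linear (R : realType) (a x1 y1 x2 y2 : R) :
  (a * x1 + x2) +i* (a * y1 + y2) = a%:C * (x1 +i* y1) + (x2 +i* y2).
Proof. by apply/eqP; rewrite eq_complex /= !mul0r subr0 addr0 !eqxx. Qed.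

Lemma real_dim_param (R : realType) (d n : nat) (I : finType)
    (S : mxtuple R d n -> Prop) (L : (I -> R) -> mxtuple R d n) :
  (forall (a : R) y1 y2, L (fun i => a * y1 i + y2 i) = (fun r => a%:C *: L y1 r + L y2 r)) ->
  injective L -> (forall Z, S Z <-> exists y, L y = Z) -> real_dim S #|I|.
Proof.
move=> L_lin L_inj SL; exists (fun x => L (fun i => x 0 (enum_rank i))); split.
- move=> a x y; rewrite -L_lin; congr L; apply: functional_extensionality => i.
  by rewrite !mxE.
- move=> x y /L_inj xy; apply/rowP => k; rewrite -(enum_valK k).
  exact: (congr1 (fun f => f (enum_val k)) xy).
- move=> Z; rewrite SL; split => [[y <-]|[x <-]]; last by eexists.
  exists (\row_k y (enum_val k)); congr L; apply: functional_extensionality => i.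
  by rewrite mxE enum_rankK.
Qed.

Section TangentSpaces.
Variables (R : realType) (d' n' : nat).
Local Notation d := d'.+1.
Local Notation n := n'.+1.
Local Notation C := R[i].
Local Notation M := 'M[C]_n.
Variable Q : mxtuple R d n.
Hypotheses (QT : Tdn Q) (Qgen : Vdn_gen Q).
Local Notation A := (Q ord0).

Lemma upper_A : upper_mx A.
Proof. exact: QT.2. Qed.

Lemma diagA_inj : injective (fun k => A k k).
Proof.
have [s [s_uniq s_size s_eigen]] := Qgen.2 ord0.
have s_diag : {subset s <= [seq A k k | k <- enum 'I_n]}.
  move=> a /s_eigen /(upper_eigenvalue_diag upper_A) [k <-].
  by apply: map_f; rewrite mem_enum.
apply/injectiveP; apply: (leq_size_uniq s_uniq s_diag).
by rewrite size_map size_enum_ord s_size.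
Qed.

Lemma tuple_horner_mx : exists p : 'I_d -> {poly C},
  p ord0 = 'X /\ forall r, Q r = horner_mx A (p r).
Proof.
have [c Qc] := fin_all_exists (fun r => upper_commutant upper_A diagA_inj (QT.1 ord0 r)).
exists (fun r => if r == ord0 then 'X else rVpoly (c r)); split; first by rewrite eqxx.
by move=> r; case: eqVneq => [->|_]; rewrite ?horner_mx_X.
Qed.

Section Parametrization.
Variable p : 'I_d -> {poly C}.
Hypotheses (p0 : p ord0 = 'X) (pQ : forall r, Q r = horner_mx A (p r)).

Lemma Q_horner_mx : Q = fun r => horner_mx A (p r).
Proof. exact: functional_extensionality. Qed.

(* Z^r = Dp_r(A)[Z1] + q_r(A), with q_1 = 0 and c r' the coefficients of q_r
   for r = lift ord0 r'. *)
Definition tangent_param (Z1 : M) (c : 'I_d' -> 'rV[C]_n) : mxtuple R d n :=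
  fun r => dhorner_mx (p r) A Z1 +
           horner_mx A (rVpoly (if unlift ord0 r is Some r' then c r' else 0)).

Lemma tangent_param_ord0 Z1 c : tangent_param Z1 c ord0 = Z1.
Proof. by rewrite /tangent_param unlift_none linear0 rmorph0 addr0 p0 dhorner_mxX. Qed.

Lemma tangent_param_lift Z1 c r' : tangent_param Z1 c (lift ord0 r') =
  dhorner_mx (p (lift ord0 r')) A Z1 + horner_mx A (rVpoly (c r')).
Proof. by rewrite /tangent_param liftK. Qed.

Lemma tangent_param_Vdn Z1 c : tangent_space (@Vdn R d n) Q (tangent_param Z1 c).
Proof. by rewrite Q_horner_mx; apply: tangent_Vdn_horner_mx. Qed.

Lemma tangent_param_Tdn Z1 c :
  upper_mx Z1 -> tangent_space (@Tdn R d n) Q (tangent_param Z1 c).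
Proof. by rewrite Q_horner_mx; apply: tangent_Tdn_horner_mx upper_A. Qed.

Lemma tangent_eqs_param Z : tangent_eqs Q Z -> exists c, Z = tangent_param (Z ord0) c.
Proof.
move=> ZQ.
have commA r : A *m (Z r - dhorner_mx (p r) A (Z ord0))
             = (Z r - dhorner_mx (p r) A (Z ord0)) *m A.
  have DA : A *m dhorner_mx (p r) A (Z ord0) - dhorner_mx (p r) A (Z ord0) *m A
            = comm_bracket (Q r) (Z ord0).
    by rewrite !mulmxE dhorner_mx_commutator -pQ.
  have ZA : A *m Z r - Z r *m A = comm_bracket (Q r) (Z ord0).
    have [->|r0] := eqVneq r ord0; first by [].
    by rewrite (ZQ r ord0 r0).
  apply/eqP; rewrite mulmxBr mulmxBl -subr_eq0.
  move: DA ZA; set D := dhorner_mx _ _ _.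
  move: (A *m Z r) (Z r *m A) (A *m D) (D *m A) => x y z w DA ZA.
  have -> : x - z - (y - w) = (x - y) - (z - w).
    by apply/matrixP => i j; rewrite !mxE; ring.
  by rewrite DA ZA subrr.
have [c Zc] := fin_all_exists (fun r => upper_commutant upper_A diagA_inj (commA r)).
exists (fun r' => c (lift ord0 r')); apply: functional_extensionality => r.
case: (unliftP ord0 r) => [r' ->|->]; last by rewrite tangent_param_ord0.
by rewrite tangent_param_lift -Zc addrC subrK.
Qed.

Lemma tangent_param_inj Z1 Z1' c c' :
  tangent_param Z1 c = tangent_param Z1' c' -> Z1 = Z1' /\ c = c'.
Proof.
move=> e; have Z1E : Z1 = Z1'.
  by rewrite -(tangent_param_ord0 Z1 c) -(tangent_param_ord0 Z1' c') e.
split => //; apply: functional_extensionality => r'.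
have := congr1 (fun Z => Z (lift ord0 r')) e.
rewrite !tangent_param_lift Z1E => /addrI /eqP; rewrite -subr_eq0 -rmorphB -linearB.
by move=> /eqP /(horner_rVpoly_eq0 upper_A diagA_inj) /eqP; rewrite subr_eq0 => /eqP.
Qed.

Lemma tangent_param_linear (a : C) Z1 Z1' c c' :
  tangent_param (a *: Z1 + Z1') (fun r' => a *: c r' + c' r')
  = fun r => a *: tangent_param Z1 c r + tangent_param Z1' c' r.
Proof.
apply: functional_extensionality => r.
rewrite /tangent_param dhorner_mx_linear scalerDr addrACA; congr (_ + _).
case: (unlift ord0 r) => [r'|]; last by rewrite !linear0 addr0.
by rewrite !linearP.
Qed.

Lemma tangent_Vdn_eqs Z : tangent_space (@Vdn R d n) Q Z <-> tangent_eqs Q Z.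
Proof.
split; first exact: tangent_space_eqs.
by move=> /tangent_eqs_param [c ->]; apply: tangent_param_Vdn.
Qed.

Lemma tangent_Tdn_eqs Z :
  tangent_space (@Tdn R d n) Q Z <-> upper_tuple Z /\ tangent_eqs Q Z.
Proof.
split => [TZ|[uZ /tangent_eqs_param [c ->]]]; last exact: tangent_param_Tdn (uZ ord0).
split; first exact: tangent_space_upper QT.2 TZ.
by apply/tangent_space_eqs/(tangent_space_sub _ TZ) => X [].
Qed.

Lemma real_dim_tangent_param (I1 : finType) (F1 : (I1 -> R) -> M) (U : M -> Prop)
    (S : mxtuple R d n -> Prop) :
  (forall (a : R) y1 y2, F1 (fun i => a * y1 i + y2 i) = a%:C *: F1 y1 + F1 y2) ->
  injective F1 -> (forall Z1, U Z1 <-> exists y, F1 y = Z1) ->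
  (forall Z, S Z <-> exists Z1 c, U Z1 /\ tangent_param Z1 c = Z) ->
  real_dim S #|{: I1 + 'I_d' * 'I_n * bool}|.
Proof.
move=> F1_lin F1_inj UF1 SU.
pose cf (y : 'I_d' * 'I_n * bool -> R) r' : 'rV[C]_n :=
  \row_j (y (r', j, false) +i* y (r', j, true)).
apply: (@real_dim_param _ _ _ _ _ (fun y => tangent_param (F1 (y \o inl)) (cf (y \o inr)))).
- move=> a y1 y2; rewrite -tangent_param_linear -F1_lin; congr tangent_param.
  apply: functional_extensionality => r'; apply/rowP => j.
  by rewrite !mxE /= complex_real_linear.
- move=> y y' /tangent_param_inj [/F1_inj e1 e2].
  apply: functional_extensionality => [[i|[[r' j] b]]].
    exact: (congr1 (fun f => f i) e1).
  by move/(congr1 (fun c => c r'))/rowP/(_ j): e2; rewrite !mxE; case: b => -[].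
- move=> Z; rewrite SU; split => [[Z1 [c [/UF1 [y1 <-] <-]]]|[y <-]]; last first.
    by exists (F1 (y \o inl)), (cf (y \o inr)); split => //; apply/UF1; eexists.
  exists (fun x => if x is inr (r', j, b) then
                     (if b then complex.Im (c r' 0 j) else complex.Re (c r' 0 j))
                   else if x is inl i then y1 i else 0).
  congr tangent_param; apply: functional_extensionality => r'; apply/rowP => j.
  by rewrite mxE /=; case: (c r' 0 j).
Qed.

Lemma real_dim_tangent_Vdn :
  real_dim (tangent_space (@Vdn R d n) Q) #|{: 'I_n * 'I_n * bool + 'I_d' * 'I_n * bool}|.
Proof.
apply: (@real_dim_tangent_param _
  (fun y => \matrix_(i, j) (y (i, j, false) +i* y (i, j, true))) (fun _ => True)).
- by move=> a y1 y2; apply/matrixP => i j; rewrite !mxE complex_real_linear.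
- move=> y y' e; apply: functional_extensionality => [[[i j] b]].
  by move/matrixP/(_ i j): e; rewrite !mxE; case: b => -[].
- move=> Z1; split => // _.
  exists (fun '(i, j, b) => if b then complex.Im (Z1 i j) else complex.Re (Z1 i j)).
  by apply/matrixP => i j; rewrite mxE; case: (Z1 i j).
- move=> Z; rewrite tangent_Vdn_eqs; split => [/tangent_eqs_param [c ZE]|[Z1 [c [_ <-]]]].
    by exists (Z ord0), c.
  exact/tangent_space_eqs/tangent_param_Vdn.
Qed.

Definition upper_param (y : 'I_n * 'I_n + 'I_n -> R) : M := \matrix_(i, j)
  if (i < j)%N then y (inl (i, j)) +i* y (inl (j, i))
  else if i == j then y (inl (i, i)) +i* y (inr i) else 0.

Lemma real_dim_tangent_Tdn :
  real_dim (tangent_space (@Tdn R d n) Q) #|{: 'I_n * 'I_n + 'I_n + 'I_d' * 'I_n * bool}|.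
Proof.
apply: (@real_dim_tangent_param _ upper_param (@upper_mx _ n')).
- move=> a y1 y2; apply/matrixP => i j; rewrite !mxE.
  case: ifP => _; first exact: complex_real_linear.
  by case: ifP => _; [exact: complex_real_linear | rewrite mulr0 addr0].
- move=> y y' e; apply: functional_extensionality => [[[i j]|i]]; last first.
    by move/matrixP/(_ i i): e; rewrite !mxE ltnn eqxx => -[].
  have [ij|ji|/val_inj ij] := ltngtP i j.
  + by move/matrixP/(_ i j): e; rewrite !mxE ij => -[].
  + by move/matrixP/(_ j i): e; rewrite !mxE ji => -[].
  + by move/matrixP/(_ i i): e; rewrite -ij !mxE ltnn eqxx => -[].
- move=> Z1; split => [uZ1|[y <-] i j ji]; last first.
    by rewrite mxE ltnNge (ltnW ji) /=; case: eqP ji => // ->; rewrite ltnn.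
  exists (fun x : 'I_n * 'I_n + 'I_n => match x with
    | inl (i, j) => if (i <= j)%N then complex.Re (Z1 i j) else complex.Im (Z1 j i)
    | inr i => complex.Im (Z1 i i) end).
  apply/matrixP => i j; rewrite mxE.
  have [ij|ji|/val_inj ij] := ltngtP i j.
  + by case: (Z1 i j).
  + by case: eqP => [ij|_]; [move: ji; rewrite ij ltnn | rewrite uZ1].
  + by rewrite -ij leqnn eqxx; case: (Z1 i i).
- move=> Z; rewrite tangent_Tdn_eqs.
  split => [[uZ /tangent_eqs_param [c ZE]]|[Z1 [c [uZ1 <-]]]].
    by exists (Z ord0), c; split => //; apply: uZ.
  split; last exact/tangent_space_eqs/tangent_param_Vdn.
  exact: tangent_space_upper QT.2 (tangent_param_Tdn c uZ1).
Qed.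

End Parametrization.

End TangentSpaces.

Local Close Scope complex_scope.

Section EmptyMatrices.
Variables (R : realType) (d : nat).

Lemma mxtuple0_eq (X Y : mxtuple R d 0) : X = Y.
Proof. by apply: functional_extensionality => r; apply/matrixP => -[]. Qed.

Lemma tangent_space_mx0 (S : mxtuple R d 0 -> Prop) (Q Z : mxtuple R d 0) :
  S Q -> tangent_space S Q Z.
Proof.
move=> SQ; exists (fun _ => Q), 1; split; [exact: ltr01 | by [] | by [] |].
by move=> e e0; exists 1; split => // t _ r [].
Qed.

Lemma real_dim_mx0 (S : mxtuple R d 0 -> Prop) (Q : mxtuple R d 0) :
  S Q -> real_dim (tangent_space S Q) 0.
Proof.
move=> SQ; exists (fun _ => Q); split.
- by move=> a x y; apply: mxtuple0_eq.
- by move=> x y _; apply/rowP => -[].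
- by move=> Z; split=> _; [exists 0; apply: mxtuple0_eq | apply: tangent_space_mx0].
Qed.

End EmptyMatrices.

Theorem lemma4p2 (R : realType) (d n : nat) (Q : mxtuple R d n) :
  (1 <= d)%N -> Tdn Q -> Vdn_gen Q ->
  [/\ (forall Z, tangent_space (@Vdn R d n) Q Z <-> tangent_eqs Q Z),
      (forall Z, tangent_space (@Tdn R d n) Q Z <-> upper_tuple Z /\ tangent_eqs Q Z),
      real_dim (tangent_space (@Vdn R d n) Q) (2 * n ^ 2 + 2 * (d - 1) * n)%N &
      real_dim (tangent_space (@Tdn R d n) Q) (n ^ 2 + (2 * d - 1) * n)%N].
Proof.
case: d Q => [|d'] // Q _ QT Qgen.
case: n Q QT Qgen => [|n'] Q QT Qgen.
  rewrite !muln0 addn0; split; try exact: real_dim_mx0 QT.1; try exact: real_dim_mx0 QT.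
  - by move=> Z; split=> [_ r s _|_]; [apply/matrixP => -[] | apply: tangent_space_mx0 QT.1].
  - move=> Z; split=> [_|_]; last exact: tangent_space_mx0 QT.
    by split=> [r [] | r s _]; last apply/matrixP => -[].
have [p [p0 pQ]] := tuple_horner_mx QT Qgen.
split.
- exact: tangent_Vdn_eqs p0 pQ.
- exact: tangent_Tdn_eqs p0 pQ.
- rewrite (_ : (_ + _)%N = #|{: 'I_n'.+1 * 'I_n'.+1 * bool + 'I_d' * 'I_n'.+1 * bool}|).
    exact: real_dim_tangent_Vdn p0 pQ.
  by rewrite !card_sum !card_prod !card_ord card_bool; lia.
- rewrite (_ : (_ + _)%N = #|{: 'I_n'.+1 * 'I_n'.+1 + 'I_n'.+1 + 'I_d' * 'I_n'.+1 * bool}|).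
    exact: real_dim_tangent_Tdn p0 pQ.
  by rewrite !card_sum !card_prod !card_ord card_bool; lia.
Qed.
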